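(* Let $G'$ be a cubic graph, and let $G$ be a cubic graph obtained from $G'$ by replacing one edge of $G'$ with a string of diamonds. Then $r_3(G)=r_3(G')$.
   Context: Graphs are finite, without loops, possibly with multiple edges; cubic means every vertex has degree $3$. For a cubic graph $G$, $\nu_3(G)$ is the maximum number of edges of a $3$-edge-colorable subgraph, and the resistance is $r_3(G)=|E(G)|-\nu_3(G)$. A diamond is a graph isomorphic to $K_4$ minus an edge; it has two vertices of degree $2$. Replacing an edge $a=uv$ of $G'$ with a string of $k\geq 1$ diamonds means: delete $a$, add $k$ vertex-disjoint new diamonds $D_1,\dots,D_k$, and add edges joining $u$ to a degree-$2$ vertex of $D_1$, the other degree-$2$ vertex of $D_i$ to a degree-$2$ vertex of $D_{i+1}$ for $1\le i<k$, and the other degree-$2$ vertex of $D_k$ to $v$ (so $6k+1$ new edges replace $a$ and the result is cubic). *)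

From mathcomp Require Import all_boot.
Set Implicit Arguments. Unset Strict Implicit. Unset Printing Implicit Defensive.

Section Graphs.
Variables (V E : finType) (ends : E -> V * V).

Definition incident (v : V) (e : E) : bool :=
  ((ends e).1 == v) || ((ends e).2 == v).

Definition loopless : Prop := forall e, (ends e).1 != (ends e).2.

Definition cubic : Prop :=
  loopless /\ forall v : V, #|[set e | incident v e]| = 3.

Definition adjacent_edges (e f : E) : bool :=
  (e != f) && [exists v, incident v e && incident v f].

Definition colorable3 (S : {set E}) : bool :=
  [exists c : {ffun E -> 'I_3},
     [forall e in S, forall f in S, adjacent_edges e f ==> (c e != c f)]].

Definition nu3 : nat := \max_(S : {set E} | colorable3 S) #|S|.

Definition r3 : nat := #|E| - nu3.
End Graphs.

(* Replacing the edge a = uv of G' by a string of n := k.+1 diamonds. *)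
Section Diamonds.
Variables (V' E' : finType) (ends' : E' -> V' * V') (a : E') (k : nat).

(* diamond i has vertices (i,0),(i,1),(i,2),(i,3); (i,0),(i,3) have degree 2 *)
Definition dvert := ('I_k.+1 * 'I_4)%type.
Definition rep_vert := (V' + dvert)%type.

(* old edges other than a; 5 edges per diamond; k.+2 connecting edges *)
Definition rep_edge :=
  ({e : E' | e != a} + ('I_k.+1 * 'I_5) + 'I_k.+2)%type.

(* the 5 edges of K4 minus the edge {0,3} *)
Definition diamond_ends (j : 'I_5) : 'I_4 * 'I_4 :=
  match nat_of_ord j with
  | 0 => (inord 0, inord 1)
  | 1 => (inord 0, inord 2)
  | 2 => (inord 1, inord 2)
  | 3 => (inord 1, inord 3)
  | _ => (inord 2, inord 3)
  end.

(* connecting edge i: u -- D_0, D_{i-1} -- D_i, D_k -- v *)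
Definition connector_ends (i : 'I_k.+2) : rep_vert * rep_vert :=
  ((if nat_of_ord i == 0 then inl (ends' a).1
    else inr (inord i.-1 : 'I_k.+1, inord 3 : 'I_4)),
   (if nat_of_ord i == k.+1 then inl (ends' a).2
    else inr (inord i : 'I_k.+1, inord 0 : 'I_4))).

Definition rep_ends (x : rep_edge) : rep_vert * rep_vert :=
  match x with
  | inl (inl e) => (inl (ends' (val e)).1, inl (ends' (val e)).2)
  | inl (inr (i, j)) => (inr (i, (diamond_ends j).1), inr (i, (diamond_ends j).2))
  | inr i => connector_ends i
  end.
End Diamonds.
Arguments rep_ends {V' E'} ends' a k x.

Definition mgraph_iso (V E Vc Ec : finType) (ends : E -> V * V)
  (endsc : Ec -> Vc * Vc) : Prop :=
  exists (f : V -> Vc) (g : E -> Ec),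
    [/\ bijective f, bijective g &
        forall e, endsc (g e) = (f (ends e).1, f (ends e).2) \/
                  endsc (g e) = (f (ends e).2, f (ends e).1)].

(* Resistance is an isomorphism invariant, so G may be taken to be the explicit
   replacement, which has 6k+6 more edges than G'; it suffices to show that
   nu_3 grows by exactly 6k+6.  A 3-edge-colourable S' of G' extends to one of G
   with 6k+6 more edges: give every connecting edge a colour al (the colour of a
   if a is in S', otherwise a colour missing at v, which exists as v has degree 3),
   colour each diamond with al+1, al+2, al, al+2, al+1, and drop the connecting
   edge at u when a is not in S'.  Conversely, in a 3-edge-colouring of a diamond
   the two pendant edges get the same colour, so if a colourable S of G contains
   the whole string, all connecting edges share one colour, which a can take in
   G'; otherwise S misses one of the 6k+7 new edges. *)

From mathcomp Require Import all_boot zify.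
Set Implicit Arguments. Unset Strict Implicit. Unset Printing Implicit Defensive.

Section Colorings.
Variables (V E : finType) (ends : E -> V * V).

Definition proper_on (S : {set E}) (c : E -> 'I_3) : Prop :=
  forall w x y, x \in S -> y \in S -> x != y ->
    incident ends w x -> incident ends w y -> c x != c y.

Lemma colorable3P (S : {set E}) :
  reflect (exists c : {ffun E -> 'I_3}, proper_on S c) (colorable3 ends S).
Proof.
apply: (iffP existsP) => -[c Hc]; exists c.
- move=> w x y Hx Hy Hxy Ix Iy; move/forallP/(_ x): Hc; rewrite Hx /=.
  move/forallP/(_ y); rewrite Hy /= => /implyP; apply.
  by rewrite /adjacent_edges Hxy; apply/existsP; exists w; rewrite Ix Iy.
- apply/forallP => x; apply/implyP => Hx; apply/forallP => y; apply/implyP => Hy.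
  by apply/implyP => /andP[Hxy /existsP[w /andP[Ix Iy]]]; apply: (Hc w).
Qed.

Lemma colorable3_proper (S : {set E}) (c : E -> 'I_3) :
  proper_on S c -> colorable3 ends S.
Proof.
move=> Hc; apply/colorable3P; exists [ffun e => c e] => w x y *.
by rewrite !ffunE; apply: (Hc w).
Qed.

Lemma colorable3_set0 : colorable3 ends set0.
Proof. by apply: (@colorable3_proper _ (fun=> ord0)) => w x y; rewrite inE. Qed.

Lemma leq_card_nu3 (S : {set E}) : colorable3 ends S -> #|S| <= nu3 ends.
Proof. exact: leq_bigmax_cond. Qed.

Lemma nu3_attained : exists2 S, colorable3 ends S & nu3 ends = #|S|.
Proof.
exists [arg max_(S > set0 | colorable3 ends S) #|S|].
  by case: arg_maxnP => //; exact: colorable3_set0.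
exact: bigmax_eq_arg colorable3_set0.
Qed.

Lemma nu3_leqP (n : nat) :
  reflect (forall S, colorable3 ends S -> #|S| <= n) (nu3 ends <= n).
Proof. exact: bigmax_leqP. Qed.

Lemma free_color (S : {set E}) (c : E -> 'I_3) (v : V) (a : E) :
  #|[set e | incident ends v e]| <= 3 -> incident ends v a -> proper_on S c ->
  exists al : 'I_3, (a \in S -> al = c a) /\
    forall e, e \in S -> e != a -> incident ends v e -> c e != al.
Proof.
move=> Hdeg Hva Hc; have [aS|aNS] := boolP (a \in S).
  by exists (c a); split=> // e He Hea Hve; apply: (Hc v).
set C := c @: [set e | (e \in S) && incident ends v e].
have /card_gt0P[al] : 0 < #|~: C|.
  suff : #|C| < 3 by have := cardsC C; rewrite card_ord; lia.
  apply: leq_ltn_trans (leq_imset_card _ _) _.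
  have Hsub : [set e | (e \in S) && incident ends v e]
      \subset [set e | incident ends v e] :\ a.
    apply/subsetP => e; rewrite !inE => /andP[He ->].
    by rewrite andbT; apply: contraTneq He => ->.
  apply: leq_ltn_trans (subset_leq_card Hsub) _.
  by move: Hdeg; rewrite (cardsD1 a) inE Hva.
rewrite inE => HalC; exists al; split=> // e He _ Hve.
by apply: contraNneq HalC => <-; apply/imsetP; exists e; rewrite // inE He.
Qed.

End Colorings.

Lemma card_set_sum (T1 T2 : finType) (S : {set T1 + T2}) :
  #|S| = #|[set x | inl x \in S]| + #|[set y | inr y \in S]|.
Proof.
by rewrite -!sum1_card big_sumType; congr (_ + _); apply: eq_bigl => x; rewrite inE.
Qed.

Lemma card_sub_setD1 (T : finType) (a : T) (B : {set T}) :
  #|[set e : {x : T | x != a} | val e \in B]| = #|B :\ a|.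
Proof.
rewrite -(card_imset _ val_inj) (_ : val @: _ = B :\ a) //; apply/setP => e.
rewrite !inE; apply/imsetP/andP => [[e0]|[Hea HeB]].
- by rewrite inE => H ->; rewrite (valP e0).
- by exists (exist _ e Hea); rewrite ?inE.
Qed.

Section Isomorphism.
Variables (V E Vc Ec : finType) (ends : E -> V * V) (endsc : Ec -> Vc * Vc).

Lemma mgraph_iso_sym : mgraph_iso ends endsc -> mgraph_iso endsc ends.
Proof.
case=> f [g [[f' ff' f'f] [g' gg' g'g] He]].
exists f', g'; split; [by exists f | by exists g |] => x.
have := He (g' x); rewrite g'g; case: (endsc x) => p q /=.
by case=> -[-> ->]; rewrite !ff'; [left | right]; case: (ends _).
Qed.

Lemma nu3_iso_le : mgraph_iso ends endsc -> nu3 ends <= nu3 endsc.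
Proof.
case=> f [g [[f' ff' f'f] [g' gg' g'g] He]].
have Hinc w e : incident endsc w (g e) = incident ends (f' w) e.
  rewrite /incident -{1 2}(f'f w).
  by case: (He e) => ->; rewrite /= !(can_eq ff') // orbC.
apply/nu3_leqP => S /colorable3P[c Hc].
rewrite -(card_imset S (can_inj gg')); apply/leq_card_nu3.
apply: (@colorable3_proper _ _ _ _ (fun x => c (g' x))) => w x0 y0.
move=> /imsetP[x Hx ->] /imsetP[y Hy ->] Hxy; rewrite !Hinc !gg' => Ix Iy.
by apply: (Hc (f' w)) => //; apply: contra Hxy => /eqP ->.
Qed.

End Isomorphism.

Lemma r3_iso (V E Vc Ec : finType) (ends : E -> V * V) (endsc : Ec -> Vc * Vc) :
  mgraph_iso ends endsc -> r3 ends = r3 endsc.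
Proof.
move=> Hiso; rewrite /r3; congr (_ - _).
  by case: Hiso => f [g [_ bg _]]; apply: bij_eq_card bg.
by apply/eqP; rewrite eqn_leq (nu3_iso_le Hiso) (nu3_iso_le (mgraph_iso_sym Hiso)).
Qed.

(* [diamond_ends] with values in nat, where case analysis evaluates it. *)
Definition diamond_pair (d : 'I_5) : nat * nat :=
  match nat_of_ord d with
  | 0 => (0, 1) | 1 => (0, 2) | 2 => (1, 2) | 3 => (1, 3) | _ => (2, 3) end.

Definition diamond_incident (t : 'I_4) (d : 'I_5) : bool :=
  ((diamond_pair d).1 == t) || ((diamond_pair d).2 == t).

Lemma eq_diamond_ends1 d (t : 'I_4) : ((diamond_ends d).1 == t) = ((diamond_pair d).1 == t).
Proof. by case: d => [[|[|[|[|[|?]]]]] ?] //=; rewrite -val_eqE /= inordK. Qed.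

Lemma eq_diamond_ends2 d (t : 'I_4) : ((diamond_ends d).2 == t) = ((diamond_pair d).2 == t).
Proof. by case: d => [[|[|[|[|[|?]]]]] ?] //=; rewrite -val_eqE /= inordK. Qed.

(* The edges 01, 02, 12, 13, 23 of a diamond get colours al+1, al+2, al, al+2,
   al+1: a proper colouring avoiding al at the degree-2 vertices 0 and 3. *)
Definition diamond_offset (d : 'I_5) : nat :=
  match nat_of_ord d with 0 => 1 | 1 => 2 | 2 => 0 | 3 => 2 | _ => 1 end.

Lemma diamond_offset_lt3 d : diamond_offset d < 3.
Proof. by case: d => [[|[|[|[|[|?]]]]] ?]. Qed.

Lemma diamond_offset_proper (t : 'I_4) d1 d2 : d1 != d2 ->
  diamond_incident t d1 -> diamond_incident t d2 ->
  diamond_offset d1 != diamond_offset d2.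
Proof.
by case: t => [[|[|[|[|?]]]] ?] //; case: d1 => [[|[|[|[|[|?]]]]] ?] //;
  case: d2 => [[|[|[|[|[|?]]]]] ?].
Qed.

Lemma diamond_offset_pendant (t : 'I_4) d : (t == 0 :> nat) || (t == 3 :> nat) ->
  diamond_incident t d -> diamond_offset d != 0.
Proof. by case: t => [[|[|[|[|?]]]] ?] //; case: d => [[|[|[|[|[|?]]]]] ?]. Qed.

Definition diamond_color (al : 'I_3) (d : 'I_5) : 'I_3 :=
  inord ((al + diamond_offset d) %% 3).

Lemma diamond_color_eq al d1 d2 :
  (diamond_color al d1 == diamond_color al d2) = (diamond_offset d1 == diamond_offset d2).
Proof.
rewrite -val_eqE /= !inordK ?ltn_pmod // eqn_modDl.
by rewrite !modn_small ?diamond_offset_lt3.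
Qed.

Lemma diamond_color_eq_base al d : (diamond_color al d == al) = (diamond_offset d == 0).
Proof.
rewrite -val_eqE /= inordK ?ltn_pmod // -{2}(modn_small (ltn_ord al)) -{2}(addn0 al).
by rewrite eqn_modDl !modn_small ?diamond_offset_lt3.
Qed.

Lemma third_color (x y z w : 'I_3) :
  x != y -> x != z -> y != z -> w != x -> w != y -> w = z.
Proof. by move: x y z w; do 4! case=> [[|[|[|?]]] ?] //; move=> *; apply: val_inj. Qed.

(* x0, x1 colour the pendant edges at vertices 0 and 3 of a diamond and d0..d4
   its edges 01, 02, 12, 13, 23; the hypotheses are the three pairs of edges
   meeting at vertex 0, 1, 2 and 3 in turn. *)
Lemma diamond_pendant_colors_eq (x0 d0 d1 d2 d3 d4 x1 : 'I_3) :
  x0 != d0 -> x0 != d1 -> d0 != d1 -> d0 != d2 -> d0 != d3 -> d2 != d3 ->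
  d1 != d2 -> d1 != d4 -> d2 != d4 -> d3 != d4 -> d3 != x1 -> d4 != x1 ->
  x1 = x0.
Proof.
move=> e1 e2 e3 e4 e5 e6 e7 e8 e9 e10 e11 e12.
have ns (x y : 'I_3) : x != y -> y != x by rewrite eq_sym.
have f2 : d2 = x0 := third_color e3 (ns _ _ e1) (ns _ _ e2) (ns _ _ e4) (ns _ _ e7).
have f3 : d3 = d1 by apply: third_color e1 e2 e3 _ (ns _ _ e5); rewrite -f2 eq_sym.
have f4 : d4 = d0 by apply: third_color e2 e1 (ns _ _ e3) _ (ns _ _ e8); rewrite -f2 eq_sym.
apply: (third_color e3 (ns _ _ e1) (ns _ _ e2)); [rewrite -f4 | rewrite -f3]; exact: ns.
Qed.

Section Replacement.
Variables (V' E' : finType) (ends' : E' -> V' * V') (a : E') (k : nat).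
Local Notation G := (rep_ends ends' a k).
Local Notation u := (ends' a).1.
Local Notation v := (ends' a).2.
Local Notation rep_edge := (rep_edge a k).

Lemma incident_old_connector x (i : 'I_k.+2) : incident G (inl x) (inr i) =
  ((i == 0 :> nat) && (u == x)) || ((i == k.+1 :> nat) && (v == x)).
Proof. by rewrite /incident /=; case: (i == 0 :> nat); case: (i == k.+1 :> nat). Qed.

Lemma incident_diamond_diamond j t j' d :
  incident G (inr (j, t)) (inl (inr (j', d))) = (j' == j) && diamond_incident t d.
Proof.
rewrite /incident /diamond_incident /= -!eq_diamond_ends1 -!eq_diamond_ends2.
have inr_eq p q : (inr p == inr q :> rep_vert V' k) = (p == q) by [].
by rewrite !inr_eq !xpair_eqE; case: (j' == j).
Qed.

Lemma incident_diamond_connector j (t : 'I_4) (i : 'I_k.+2) :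
  incident G (inr (j, t)) (inr i) =
  ((i != 0 :> nat) && (i.-1 == j :> nat) && (t == 3 :> nat)) ||
  ((i != k.+1 :> nat) && (i == j :> nat) && (t == 0 :> nat)).
Proof.
rewrite /incident /= /connector_ends /=.
have inr_eq p q : (inr p == inr q :> rep_vert V' k) = (p == q) by [].
have Hi := ltn_ord i.
case Hi0: (i == 0 :> nat); case Hik: (i == k.+1 :> nat) => /=;
  move/eqP: Hi0 => Hi0; move/eqP: Hik => Hik;
  rewrite ?inr_eq ?xpair_eqE -?val_eqE /= ?inordK //; try lia.
by rewrite [3 == _]eq_sym; case: (_ && _).
Qed.

Lemma incident_diamond_left j t :
  incident G (inr (j, t)) (inr (widen_ord (leqnSn _) j)) = (t == 0 :> nat).
Proof. by rewrite incident_diamond_connector /=; have := ltn_ord j; lia. Qed.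

Lemma incident_diamond_right j t :
  incident G (inr (j, t)) (inr (lift ord0 j)) = (t == 3 :> nat).
Proof. rewrite incident_diamond_connector /= /bump /=; lia. Qed.

Definition new_edges_in (S : {set rep_edge}) : bool :=
  [forall p, inl (inr p) \in S] && [forall i, inr i \in S].

Lemma connector_color_step (S : {set rep_edge}) (c : rep_edge -> 'I_3) :
  proper_on G S c -> new_edges_in S ->
  forall j : 'I_k.+1, c (inr (lift ord0 j)) = c (inr (widen_ord (leqnSn _) j)).
Proof.
move=> Hc /andP[/forallP Hd /forallP Hcc] j.
pose D m (Hm : m < 5) : rep_edge := inl (inr (j, Ordinal Hm)).
pose T m (Hm : m < 4) : rep_vert V' k := inr (j, Ordinal Hm).
apply: (@diamond_pendant_colors_eq _
  (c (D 0 isT)) (c (D 1 isT)) (c (D 2 isT)) (c (D 3 isT)) (c (D 4 isT)));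
  [ apply: (Hc (T 0 isT)) | apply: (Hc (T 0 isT)) | apply: (Hc (T 0 isT))
  | apply: (Hc (T 1 isT)) | apply: (Hc (T 1 isT)) | apply: (Hc (T 1 isT))
  | apply: (Hc (T 2 isT)) | apply: (Hc (T 2 isT)) | apply: (Hc (T 2 isT))
  | apply: (Hc (T 3 isT)) | apply: (Hc (T 3 isT)) | apply: (Hc (T 3 isT)) ];
  rewrite /D /T ?incident_diamond_diamond ?incident_diamond_left
    ?incident_diamond_right ?eqxx //=.
all: by apply/negP => /eqP[].
Qed.

Lemma connector_color_last (S : {set rep_edge}) (c : rep_edge -> 'I_3) :
  proper_on G S c -> new_edges_in S -> c (inr ord_max) = c (inr ord0).
Proof.
move=> Hc Hnew.
suff Hn n : n <= k.+1 -> c (inr (inord n)) = c (inr ord0).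
  by rewrite -(Hn k.+1) // -[ord_max]inord_val.
elim: n => [|n IH] Hn; first by rewrite -[ord0]inord_val.
have Hj : n < k.+1 by [].
have -> : inord n.+1 = lift ord0 (Ordinal Hj) by apply: val_inj; rewrite /= inordK.
rewrite (connector_color_step Hc Hnew) -(IH (ltnW Hn)).
by congr (c (inr _)); apply: val_inj; rewrite /= inordK // leqW.
Qed.

(* Connecting edge 0 ends at u, where al is known to be free only when a is in S'. *)
Definition extend_set (S' : {set E'}) : {set rep_edge} :=
  [set x : rep_edge | match x with
    | inl (inl e) => val e \in S'
    | inl (inr _) => true
    | inr i => (i != 0 :> nat) || (a \in S') end].

Definition extend_coloring (c' : E' -> 'I_3) (al : 'I_3) (x : rep_edge) : 'I_3 :=
  match x with
  | inl (inl e) => c' (val e)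
  | inl (inr (_, d)) => diamond_color al d
  | inr _ => al end.

Section Extension.
Variables (S' : {set E'}) (c' : E' -> 'I_3) (al : 'I_3).
Hypotheses (Hc' : proper_on ends' S' c') (Hal_a : a \in S' -> al = c' a)
  (Hal_v : forall e, e \in S' -> e != a -> incident ends' v e -> c' e != al).

Lemma extend_old_connector x (e : {e : E' | e != a}) (i : 'I_k.+2) :
  val e \in S' -> (i != 0 :> nat) || (a \in S') -> incident ends' x (val e) ->
  incident G (inl x) (inr i) -> c' (val e) != al.
Proof.
move=> He Hi Ie; rewrite incident_old_connector.
case/orP => /andP [/eqP Hi0 /eqP Hu].
- move: Hi; rewrite Hi0 /= => Ha; rewrite (Hal_a Ha).
  by apply: (@Hc' x) => //; [exact: (valP e) | rewrite /incident Hu eqxx].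
- by apply: Hal_v => //; [exact: (valP e) | rewrite Hu].
Qed.

Lemma extend_proper :
  loopless ends' -> proper_on G (extend_set S') (extend_coloring c' al).
Proof.
move=> Hloop w x y; rewrite !inE.
case: w => [x0 | [j t]].
- case: x => [[e | [j1 d1]] | i1]; case: y => [[f | [j2 d2]] | i2];
    move=> //= Hx Hy Hxy Ix Iy.
  + by apply: (@Hc' x0) => //; apply: contra Hxy => /eqP/val_inj ->.
  + exact: (extend_old_connector Hx Hy Ix Iy).
  + by rewrite eq_sym; apply: (extend_old_connector Hy Hx Iy Ix).
  + exfalso; move: Ix Iy; rewrite !incident_old_connector.
    case/orP => /andP [/eqP H1 /eqP H1']; case/orP => /andP [/eqP H2 /eqP H2'];
      first [by move/eqP: Hxy; apply; congr inr; apply: val_inj; rewrite /= H1 H2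
            | by move: (Hloop a); rewrite H1' H2' eqxx].
- case: x => [[e | [j1 d1]] | i1]; case: y => [[f | [j2 d2]] | i2];
    move=> //= _ _ Hxy Ix Iy.
  + move: Ix Iy; rewrite !incident_diamond_diamond => /andP [/eqP E1 I1] /andP [/eqP E2 I2].
    rewrite diamond_color_eq; apply: (diamond_offset_proper (t := t)) => //.
    by apply: contra Hxy => /eqP ->; rewrite E1 E2.
  + move: Ix Iy; rewrite incident_diamond_diamond incident_diamond_connector.
    case/andP => _ I1 I2; rewrite diamond_color_eq_base.
    apply: (diamond_offset_pendant (t := t)) => //.
    by case/orP: I2 => /andP [_ ->]; rewrite ?orbT.
  + move: Ix Iy; rewrite incident_diamond_diamond incident_diamond_connector.
    move=> I2 /andP [_ I1]; rewrite eq_sym diamond_color_eq_base.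
    apply: (diamond_offset_pendant (t := t)) => //.
    by case/orP: I2 => /andP [_ ->]; rewrite ?orbT.
  + exfalso; move: Ix Iy; rewrite !incident_diamond_connector.
    have : (i1 : nat) != i2 by rewrite val_eqE.
    lia.
Qed.

End Extension.

Lemma card_extend_set (S' : {set E'}) : #|extend_set S'| = #|S'| + (6 * k + 6).
Proof.
rewrite card_set_sum card_set_sum.
have -> : #|[set e | inl e \in [set x | inl x \in extend_set S']]| = #|S' :\ a|.
  by rewrite -card_sub_setD1; apply: eq_card => e; rewrite !inE.
have -> : [set p | inr p \in [set x | inl x \in extend_set S']] = setT.
  by apply/setP => p; rewrite !inE.
have -> : [set i | inr i \in extend_set S'] =
          if a \in S' then setT else [set~ ord0].
  by apply/setP => i; case Ha: (a \in S'); rewrite !inE Ha ?orbT ?orbF -?val_eqE.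
rewrite cardsT card_prod !card_ord (cardsD1 a S').
by case: (a \in S'); rewrite ?cardsT ?cardsC1 card_ord; lia.
Qed.

(* a is kept iff S contains the whole string; it then takes the colour of the
   connecting edges, which all agree by [connector_color_last]. *)
Definition restrict_set (S : {set rep_edge}) : {set E'} :=
  [set e | if insub e is Some e0 then inl (inl e0) \in S else new_edges_in S].

Definition restrict_coloring (c : rep_edge -> 'I_3) (e : E') : 'I_3 :=
  if insub e is Some e0 then c (inl (inl e0)) else c (inr ord0).

Section Restriction.
Variables (S : {set rep_edge}) (c : rep_edge -> 'I_3).
Hypothesis Hc : proper_on G S c.

Lemma restrict_old_a w (e : {e : E' | e != a}) :
  inl (inl e) \in S -> new_edges_in S -> incident ends' w (val e) ->
  incident ends' w a -> c (inl (inl e)) != c (inr ord0).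
Proof.
move=> He Hnew Ie /orP[/eqP Hu | /eqP Hv].
- apply: (@Hc (inl w)) => //; first by case/andP: Hnew => _ /forallP.
  by rewrite incident_old_connector /= Hu eqxx.
- rewrite -(connector_color_last Hc Hnew); apply: (@Hc (inl w)) => //.
    by case/andP: Hnew => _ /forallP.
  by rewrite incident_old_connector /= Hv !eqxx.
Qed.

Lemma restrict_proper : proper_on ends' (restrict_set S) (restrict_coloring c).
Proof.
move=> w e f; rewrite !inE /restrict_coloring.
case: insubP => [e0 _ <- | /negPn/eqP ->]; case: insubP => [f0 _ <- | /negPn/eqP ->] //.
- by move=> He Hf Hef Ie If; apply: (@Hc (inl w)).
- by move=> He Hnew _ Ie Ia; apply: (restrict_old_a He Hnew Ie Ia).
- by move=> Hnew Hf _ Ia If; rewrite eq_sym; apply: (restrict_old_a Hf Hnew If Ia).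
- by rewrite eqxx.
Qed.

End Restriction.

Lemma card_restrict_set (S : {set rep_edge}) :
  #|S| <= #|restrict_set S| + (6 * k + 6).
Proof.
rewrite card_set_sum card_set_sum (cardsD1 a (restrict_set S)).
have -> : #|[set e | inl e \in [set x | inl x \in S]]| = #|restrict_set S :\ a|.
  by rewrite -card_sub_setD1; apply: eq_card => e0; rewrite !inE valK.
have -> : (a \in restrict_set S) = new_edges_in S by rewrite inE insubF ?eqxx.
set D := [set p | inr p \in [set x | inl x \in S]].
set C := [set i | inr i \in S].
have HD : #|D| + #|~: D| = k.+1 * 5 by rewrite cardsC card_prod !card_ord.
have HC : #|C| + #|~: C| = k.+2 by rewrite cardsC card_ord.
have [Hnew | Hnew] := boolP (new_edges_in S); first lia.
suff : 0 < #|~: D| + #|~: C| by lia.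
move: Hnew; rewrite negb_and => /orP [/forallPn [p Hp] | /forallPn [i Hi]].
- suff : 0 < #|~: D| by lia.
  by apply/card_gt0P; exists p; rewrite !inE.
- suff : 0 < #|~: C| by lia.
  by apply/card_gt0P; exists i; rewrite !inE.
Qed.

Lemma nu3_rep_edges : cubic ends' -> nu3 G = nu3 ends' + (6 * k + 6).
Proof.
case=> Hloop Hdeg; apply/eqP; rewrite eqn_leq; apply/andP; split.
  apply/nu3_leqP => S /colorable3P[c /restrict_proper Hc].
  apply: leq_trans (card_restrict_set S) _; rewrite leq_add2r.
  exact/leq_card_nu3/(colorable3_proper Hc).
have [S' /colorable3P[c' Hc'] ->] := nu3_attained ends'.
have Hva : incident ends' v a by rewrite /incident eqxx orbT.
have [al [Hal_a Hal_v]] := free_color (eq_leq (Hdeg v)) Hva Hc'.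
rewrite -card_extend_set; apply/leq_card_nu3/colorable3_proper.
exact: (extend_proper Hc' Hal_a Hal_v Hloop).
Qed.

Lemma card_rep_edge : #|{: rep_edge}| = #|E'| + (6 * k + 6).
Proof.
rewrite !card_sum card_prod !card_ord card_sig.
have -> : #|[pred x | x != a]| = #|E'|.-1 by rewrite -(cardC1 a); apply: eq_card.
have : 0 < #|E'| by apply/card_gt0P; exists a.
lia.
Qed.

Lemma r3_rep_edges : cubic ends' -> r3 G = r3 ends'.
Proof. by move=> Hcub; rewrite /r3 nu3_rep_edges // card_rep_edge subnDr. Qed.

End Replacement.

Theorem lemma2 (V' E' : finType) (ends' : E' -> V' * V') (a : E') (k : nat)
  (V E : finType) (ends : E -> V * V) :
  cubic ends' ->
  cubic ends ->
  mgraph_iso ends (rep_ends ends' a k) ->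
  r3 ends = r3 ends'.
Proof. by move=> Hcub _ /r3_iso ->; apply: r3_rep_edges. Qed.
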